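(* Let $X\subseteq \mathbb{P}^1\times\mathbb{P}^1\times\mathbb{P}^1$ be a variety of lines such that, for each $h=1,2,3$, $U_h(X)$ resembles a Ferrers diagram. Then $X$ has the $Hyp_5(\star)$-property if and only if for all $a_1,a_2\in[d_1]$, $b_1,b_2\in[d_2]$, $c_1,c_2\in[d_3]$ the following three conditions hold: (1) either $\left(\begin{array}{cc}\mu_{a_1b_1c_1} & \mu_{a_1b_2c_1}\\ \mu_{a_2b_1c_1} & \mu_{a_2b_2c_1}\end{array}\right)\neq\left(\begin{array}{cc}2&1\\2&2\end{array}\right)$ or $\left(\begin{array}{cc}\mu_{a_1b_10} & \mu_{a_1b_20}\\ \mu_{a_2b_10} & \mu_{a_2b_20}\end{array}\right)\neq\left(\begin{array}{cc}1&1\\0&1\end{array}\right)$; (2) either $\left(\begin{array}{cc}\mu_{a_1b_1c_1} & \mu_{a_1b_1c_2}\\ \mu_{a_2b_1c_1} & \mu_{a_2b_1c_2}\end{array}\right)\neq\left(\begin{array}{cc}2&1\\2&2\end{array}\right)$ or $\left(\begin{array}{cc}\mu_{a_10c_1} & \mu_{a_10c_2}\\ \mu_{a_20c_1} & \mu_{a_20c_2}\end{array}\right)\neq\left(\begin{array}{cc}1&1\\0&1\end{array}\right)$; (3) either $\left(\begin{array}{cc}\mu_{a_1b_1c_1} & \mu_{a_1b_1c_2}\\ \mu_{a_1b_2c_1} & \mu_{a_1b_2c_2}\end{array}\right)\neq\left(\begin{array}{cc}2&1\\2&2\end{array}\right)$ or $\left(\begin{array}{cc}\mu_{0b_1c_1}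 & \mu_{0b_1c_2}\\ \mu_{0b_2c_1} & \mu_{0b_2c_2}\end{array}\right)\neq\left(\begin{array}{cc}1&1\\0&1\end{array}\right)$.
   Context: $R=K[x_{1,0},x_{1,1},x_{2,0},x_{2,1},x_{3,0},x_{3,1}]$ ($K$ algebraically closed, characteristic zero) trigraded by $\deg x_{i,j}=\mathbf e_i$, coordinate ring of $\mathbb{P}^1\times\mathbb{P}^1\times\mathbb{P}^1$. A variety of lines is written $X= \bigcup_{(i,j)\in U_3(X)} \mathcal{L}(A_i,B_j)\cup\bigcup_{(i,k)\in U_2(X)} \mathcal{L}(A_i,C_k)\cup \bigcup_{(j,k)\in U_1(X)} \mathcal{L}(B_j,C_k)$, where $\mathcal L(A_1),\ldots,\mathcal L(A_{d_1})$, $\mathcal L(B_1),\ldots,\mathcal L(B_{d_2})$, $\mathcal L(C_1),\ldots,\mathcal L(C_{d_3})$ are the distinct hyperplanes containing some line of $X$, defined by linear forms of degrees $(1,0,0),(0,1,0),(0,0,1)$ respectively, $\mathcal L(F,G)$ is the line defined by $(F,G)$, $U_3(X)\subseteq[d_1]\times[d_2]$, $U_2(X)\subseteq[d_1]\times[d_3]$, $U_1(X)\subseteq[d_2]\times[d_3]$, $[n]=\{1,\dots,n\}$. $U_h(X)$ resembles a Ferrers diagram if after permuting each of its two index sets it becomes a set $U$ with: $(u,v)\in U\Rightarrow (u',v')\in U$ for all $1\le u'\le u$, $1\le v'\le v$. For $P_{ijk}=\mathcal L(A_i)\cap\mathcal L(B_j)\cap\mathcal L(C_k)$, $\mu_{ijk}$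 is the number of lines of $X$ through $P_{ijk}$. Moreover $\mu_{ij0}=1$ if $\mathcal L(A_i,B_j)\in X$ and $0$ otherwise; $\mu_{i0k}=1$ if $\mathcal L(A_i,C_k)\in X$ and $0$ otherwise; $\mu_{0jk}=1$ if $\mathcal L(B_j,C_k)\in X$ and $0$ otherwise. $X$ has the $Hyp_5(\star)$-property if for any $5$ hyperplanes $H_1,\ldots,H_5$ (each defined by a linear form of degree some $\mathbf e_i$) such that $\mathcal{L}(H_i,H_j)$ is a line of $X$ for all $j\neq i-1,i,i+1$ (indices modulo $5$), there is $u$ with $\mathcal{L}(H_u,H_{u+1})$ a line of $X$. *)

From HB Require Import structures.
From mathcomp Require Import all_boot all_order all_algebra.
From mathcomp Require Import perm.
Set Implicit Arguments. Unset Strict Implicit. Unset Printing Implicit Defensive.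

(* Points of P^1(K): [None] is the point at infinity, [Some t] is (1:t).
   A hyperplane of P^1xP^1xP^1 defined by a linear form of degree e_k
   (up to scalar) is the same as a pair (k, point of the k-th factor P^1). *)
Definition P1 (K : Type) := option K.

(* hyperplane (type k in 'I_3, i.e. degree e_(k+1); point of P^1) *)
Definition hyp (K : Type) := ('I_3 * P1 K)%type.

(* Data of a variety of lines X:
   a i = the point of the 1st factor defining L(A_i), similarly b, c;
   U3 subset [d1]x[d2], U2 subset [d1]x[d3], U1 subset [d2]x[d3]
   (indices are 0-based: [d] is represented by 'I_d). *)
Record varLines (K : Type) (d1 d2 d3 : nat) := VarLines {
  ptA : 'I_d1 -> P1 K;
  ptB : 'I_d2 -> P1 K;
  ptC : 'I_d3 -> P1 K;
  U3 : {set 'I_d1 * 'I_d2};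
  U2 : {set 'I_d1 * 'I_d3};
  U1 : {set 'I_d2 * 'I_d3}
}.

Section Defs.
Variables (K : eqType) (d1 d2 d3 : nat) (X : varLines K d1 d2 d3).

Definition HA (i : 'I_d1) : hyp K := (inord 0 : 'I_3, ptA X i).
Definition HB (j : 'I_d2) : hyp K := (inord 1 : 'I_3, ptB X j).
Definition HC (k : 'I_d3) : hyp K := (inord 2 : 'I_3, ptC X k).

Definition wf_varLines : Prop :=
  injective (ptA X) /\ injective (ptB X) /\ injective (ptC X) /\
  (forall i : 'I_d1, (exists j, (i, j) \in U3 X) \/ (exists k, (i, k) \in U2 X)) /\
  (forall j : 'I_d2, (exists i, (i, j) \in U3 X) \/ (exists k, (j, k) \in U1 X)) /\
  (forall k : 'I_d3, (exists i, (i, k) \in U2 X) \/ (exists j, (j, k) \in U1 X)).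

(* L(H,H') is a line of X: the line cut out by H and H' is one of the lines
   L(A_i,B_j) ((i,j) in U3), L(A_i,C_k) ((i,k) in U2), L(B_j,C_k) ((j,k) in U1).
   For hyperplanes of distinct types this happens iff {H,H'} is the
   corresponding pair of hyperplanes; for hyperplanes of the same type
   L(H,H') is empty or a hyperplane, never a line. *)
Definition is_pair (H H' P Q : hyp K) : Prop :=
  (H = P /\ H' = Q) \/ (H = Q /\ H' = P).

Definition line_of (H H' : hyp K) : Prop :=
  (exists ij, ij \in U3 X /\ is_pair H H' (HA ij.1) (HB ij.2)) \/
  (exists ik, ik \in U2 X /\ is_pair H H' (HA ik.1) (HC ik.2)) \/
  (exists jk, jk \in U1 X /\ is_pair H H' (HB jk.1) (HC jk.2)).

Definition Hyp5_star : Prop :=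
  forall H : 'I_5 -> hyp K,
    (forall i j : 'I_5, j != ord_pred i -> j != i -> j != ordS i ->
       line_of (H i) (H j)) ->
    exists u : 'I_5, line_of (H u) (H (ordS u)).

(* mu_{ijk}: the number of lines of X through P_{ijk} = (a_i, b_j, c_k). *)
Definition mu (i : 'I_d1) (j : 'I_d2) (k : 'I_d3) : nat :=
  #|[set uv in U3 X | (ptA X uv.1 == ptA X i) && (ptB X uv.2 == ptB X j)]| +
  #|[set uw in U2 X | (ptA X uw.1 == ptA X i) && (ptC X uw.2 == ptC X k)]| +
  #|[set vw in U1 X | (ptB X vw.1 == ptB X j) && (ptC X vw.2 == ptC X k)]|.

Definition muAB (i : 'I_d1) (j : 'I_d2) : nat := ((i, j) \in U3 X : nat).
Definition muAC (i : 'I_d1) (k : 'I_d3) : nat := ((i, k) \in U2 X : nat).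
Definition muBC (j : 'I_d2) (k : 'I_d3) : nat := ((j, k) \in U1 X : nat).

End Defs.

Definition ferrers_like (m n : nat) (U : {set 'I_m * 'I_n}) : Prop :=
  exists (s : {perm 'I_m}) (t : {perm 'I_n}),
    forall (u u' : 'I_m) (v v' : 'I_n),
      (u, v) \in [set (s x.1, t x.2) | x in U] ->
      (u' <= u)%N -> (v' <= v)%N ->
      (u', v') \in [set (s x.1, t x.2) | x in U].

From HB Require Import structures.
From mathcomp Require Import all_boot all_order all_algebra.
From mathcomp Require Import perm.
Import GRing.Theory.
Set Implicit Arguments. Unset Strict Implicit. Unset Printing Implicit Defensive.

(* The lines of X are the edges of a tripartite graph whose vertices are the
   hyperplanes L(A_i), L(B_j), L(C_k), and Hyp_5(star) fails exactly when this
   graph has an induced pentagon.  The types of the vertices of a pentagon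
   properly 3-colour it, so up to rotation and reflection they read x y z y z:
   the pentagon is C B A B A, B C A C A or A C B C B.  Since
   mu_ijk = mu_ij0 + mu_i0k + mu_0jk, the forbidden mu-patterns (1), (2), (3)
   describe exactly these three shapes. *)

Lemma proper_3coloring_C5_alternates (x0 x1 x2 x3 x4 : 'I_3) :
  cycle (fun x y => x != y) [:: x0; x1; x2; x3; x4] ->
  [|| (x1 == x3) && (x2 == x4), (x2 == x4) && (x3 == x0), (x3 == x0) && (x4 == x1),
      (x4 == x1) && (x0 == x2) | (x0 == x2) && (x1 == x3)].
Proof.
by case: x0 x1 x2 x3 x4 => [[|[|[|//]]] ?] [[|[|[|//]]] ?] [[|[|[|//]]] ?]
  [[|[|[|//]]] ?] [[|[|[|//]]] ?].
Qed.

Section Tripartite.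
Variables (A B C : Type) (ab : A -> B -> bool) (ac : A -> C -> bool) (bc : B -> C -> bool).

Inductive vertex := VA of A | VB of B | VC of C.

Definition adj (u v : vertex) : bool :=
  match u, v with
  | VA a, VB b | VB b, VA a => ab a b
  | VA a, VC c | VC c, VA a => ac a c
  | VB b, VC c | VC c, VB b => bc b c
  | _, _ => false
  end.

Definition kind (v : vertex) : 'I_3 :=
  match v with VA _ => ord0 | VB _ => @Ordinal 3 1 isT | VC _ => ord_max end.

Lemma adj_sym : symmetric adj.
Proof. by case=> ? [] ?. Qed.

Lemma adj_kind u v : adj u v -> kind u != kind v.
Proof. by case: u v => ? [] ?. Qed.

Definition induced_pentagon (v0 v1 v2 v3 v4 : vertex) : bool :=
  cycle adj [:: v0; v1; v2; v3; v4] &&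
  cycle (fun u v => ~~ adj u v) [:: v0; v2; v4; v1; v3].

Lemma induced_pentagon_rot v0 v1 v2 v3 v4 :
  induced_pentagon v0 v1 v2 v3 v4 -> induced_pentagon v1 v2 v3 v4 v0.
Proof.
rewrite /induced_pentagon -[[:: v1; _; _; _; _]]/(rot 1 [:: v0; v1; v2; v3; v4]).
by rewrite -[[:: v1; v3; _; _; _]]/(rot 3 [:: v0; v2; v4; v1; v3]) !rot_cycle.
Qed.

Lemma induced_pentagon_rev v0 v1 v2 v3 v4 :
  induced_pentagon v0 v1 v2 v3 v4 -> induced_pentagon v0 v4 v3 v2 v1.
Proof.
rewrite /induced_pentagon.
rewrite -[[:: v0; v4; _; _; _]]/(rot 4 (rev [:: v0; v1; v2; v3; v4])).
rewrite -[[:: v0; v3; _; _; _]]/(rot 4 (rev [:: v0; v2; v4; v1; v3])).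
have adjC : (fun u v => adj v u) =2 adj := fun u v => adj_sym v u.
have nadjC : (fun u v => ~~ adj v u) =2 (fun u v => ~~ adj u v).
  by move=> u v; rewrite adj_sym.
by rewrite !rot_cycle !rev_cycle (eq_cycle adjC) (eq_cycle nadjC).
Qed.

Lemma induced_pentagon_kinds v0 v1 v2 v3 v4 : induced_pentagon v0 v1 v2 v3 v4 ->
  cycle (fun x y => x != y) [:: kind v0; kind v1; kind v2; kind v3; kind v4].
Proof.
case/andP=> cyc _.
rewrite -[[:: kind v0; _; _; _; _]]/(map kind [:: v0; v1; v2; v3; v4]).
by rewrite cycle_map (sub_cycle adj_kind cyc).
Qed.

Lemma induced_pentagon_alternating v0 v1 v2 v3 v4 :
  induced_pentagon v0 v1 v2 v3 v4 -> exists u0 u1 u2 u3 u4,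
    [&& induced_pentagon u0 u1 u2 u3 u4, kind u1 == kind u3 & kind u2 == kind u4].
Proof.
move=> pent; have := induced_pentagon_kinds pent.
move=> /proper_3coloring_C5_alternates /orP[|/or4P[]] /andP[k1 k2].
- by exists v0, v1, v2, v3, v4; rewrite pent k1 k2.
- by exists v1, v2, v3, v4, v0; rewrite k1 k2 !andbT; apply: induced_pentagon_rot.
- by exists v2, v3, v4, v0, v1; rewrite k1 k2 !andbT; do 2 apply: induced_pentagon_rot.
- by exists v3, v4, v0, v1, v2; rewrite k1 k2 !andbT; do 3 apply: induced_pentagon_rot.
- by exists v4, v0, v1, v2, v3; rewrite k1 k2 !andbT; do 4 apply: induced_pentagon_rot.
Qed.

Lemma induced_pentagon_shapes v0 v1 v2 v3 v4 : induced_pentagon v0 v1 v2 v3 v4 ->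
  [\/ exists a1 a2 b1 b2 c, induced_pentagon (VC c) (VB b1) (VA a1) (VB b2) (VA a2),
      exists a1 a2 b c1 c2, induced_pentagon (VB b) (VC c1) (VA a1) (VC c2) (VA a2)
    | exists a b1 b2 c1 c2, induced_pentagon (VA a) (VC c1) (VB b1) (VC c2) (VB b2)].
Proof.
case/induced_pentagon_alternating=> u0 [u1 [u2 [u3 [u4 /and3P[pent]]]]].
have := induced_pentagon_kinds pent.
(* [//] discards every choice of kinds that is not of the form x y z y z. *)
case: u0 u1 u2 u3 u4 pent => [a0|b0|c0] [a1|b1|c1] [a2|b2|c2] [a3|b3|c3] [a4|b4|c4]
  // pent _ _ _.
- by apply: Or33; exists a0, b3, b1, c4, c2; apply: induced_pentagon_rev.
- by apply: Or33; exists a0, b2, b4, c1, c3.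
- by apply: Or32; exists a3, a1, b0, c4, c2; apply: induced_pentagon_rev.
- by apply: Or32; exists a2, a4, b0, c1, c3.
- by apply: Or31; exists a3, a1, b4, b2, c0; apply: induced_pentagon_rev.
- by apply: Or31; exists a2, a4, b1, b3, c0.
Qed.

End Tripartite.

Arguments VA {A B C}.
Arguments VB {A B C}.
Arguments VC {A B C}.

Lemma card_inj_pair_fiber (A B : finType) (T1 T2 : eqType)
    (f : A -> T1) (g : B -> T2) (U : {set A * B}) (a : A) (b : B) :
  injective f -> injective g ->
  #|[set uv in U | (f uv.1 == f a) && (g uv.2 == g b)]| = ((a, b) \in U).
Proof.
move=> injf injg.
have -> : [set uv in U | (f uv.1 == f a) && (g uv.2 == g b)] = U :&: [set (a, b)].
  by apply/setP=> -[u v]; rewrite !inE (inj_eq injf) (inj_eq injg) xpair_eqE.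
case: (boolP ((a, b) \in U)) => abU; first by rewrite (setIidPr _) ?cards1 ?sub1set.
rewrite (_ : _ :&: _ = set0) ?cards0 //; apply/setP=> x; rewrite !inE.
by case: eqP => [->|_]; rewrite ?(negbTE abU) ?andbF.
Qed.

Lemma neq_or_neqP (T1 T2 : eqType) (x1 y1 : T1) (x2 y2 : T2) :
  reflect (x1 <> y1 \/ x2 <> y2) (~~ ((x1 == y1) && (x2 == y2))).
Proof. by rewrite negb_and; apply: (iffP orP) => -[/eqP|/eqP]; auto. Qed.

Section LinesOfVariety.
Variables (K : eqType) (d1 d2 d3 : nat) (X : varLines K d1 d2 d3).

Local Notation ab := (fun (i : 'I_d1) (j : 'I_d2) => (i, j) \in U3 X).
Local Notation ac := (fun (i : 'I_d1) (k : 'I_d3) => (i, k) \in U2 X).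
Local Notation bc := (fun (j : 'I_d2) (k : 'I_d3) => (j, k) \in U1 X).

Definition hyp_of_vertex (v : vertex 'I_d1 'I_d2 'I_d3) : hyp K :=
  match v with VA i => HA X i | VB j => HB X j | VC k => HC X k end.

Lemma line_of_hyp_of_vertex H H' : line_of X H H' -> exists v, H = hyp_of_vertex v.
Proof.
case=> [[[i j] [_ [[-> _]|[-> _]]]]|[[[i k] [_ [[-> _]|[-> _]]]]|
         [[j k] [_ [[-> _]|[-> _]]]]]].
- by exists (VA i).
- by exists (VB j).
- by exists (VA i).
- by exists (VC k).
- by exists (VB j).
- by exists (VC k).
Qed.

Hypotheses (injA : injective (ptA X)) (injB : injective (ptB X))
  (injC : injective (ptC X)).

Lemma hyp_of_vertex_inj : injective hyp_of_vertex.
Proof.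
case=> i [] j /eqP; rewrite /= /HA /HB /HC xpair_eqE -val_eqE /= ?inordK //=.
all: by rewrite ?(inj_eq injA) ?(inj_eq injB) ?(inj_eq injC) => /eqP ->.
Qed.

Lemma line_of_vertexP u v :
  reflect (line_of X (hyp_of_vertex u) (hyp_of_vertex v)) (adj ab ac bc u v).
Proof.
apply: (iffP idP).
  case: u v => i [] j //= uv;
    [left | right; left | left | right; right | right; left | right; right];
    by eexists (_, _); split; [exact: uv | rewrite /is_pair; by [left | right]].
case=> [[[i j] [uv]]|[[[i k] [uv]]|[[j k] [uv]]]].
- rewrite -[HA X i]/(hyp_of_vertex (VA i)) -[HB X j]/(hyp_of_vertex (VB j)).
  by case=> -[/hyp_of_vertex_inj-> /hyp_of_vertex_inj->].
- rewrite -[HA X i]/(hyp_of_vertex (VA i)) -[HC X k]/(hyp_of_vertex (VC k)).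
  by case=> -[/hyp_of_vertex_inj-> /hyp_of_vertex_inj->].
- rewrite -[HB X j]/(hyp_of_vertex (VB j)) -[HC X k]/(hyp_of_vertex (VC k)).
  by case=> -[/hyp_of_vertex_inj-> /hyp_of_vertex_inj->].
Qed.

Local Notation o5 n := (@Ordinal 5 n isT).

Lemma Hyp5_star_no_induced_pentagon v0 v1 v2 v3 v4 :
  Hyp5_star X -> ~~ induced_pentagon ab ac bc v0 v1 v2 v3 v4.
Proof.
move=> hyp5; apply/negP; rewrite /induced_pentagon /= !andbT.
case/andP=> /and5P[e01 e12 e23 e34 e40] /and5P[n04 n43 n32 n21 n10].
(* [H (2 k)] is [v_k], so the pentagon is the pentagram of [H]. *)
pose H i := hyp_of_vertex (nth v0 [:: v0; v3; v1; v4; v2] i).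
have [|u] := hyp5 H.
  case=> [[|[|[|[|[|//]]]]] ?] [[|[|[|[|[|//]]]]] ?] //= _ _ _;
  by apply/line_of_vertexP; rewrite // adj_sym.
by case: u => [[|[|[|[|[|//]]]]] ?] /line_of_vertexP /=; rewrite adj_sym; apply/negP.
Qed.

Lemma no_induced_pentagon_Hyp5_star :
  (forall v0 v1 v2 v3 v4, ~~ induced_pentagon ab ac bc v0 v1 v2 v3 v4) -> Hyp5_star X.
Proof.
move=> nopent H pentagram.
(* Indexing by [nat] rather than ['I_5] lets [w (ordS i)] compute to [w i.+1 %% 5]. *)
have [w Hw] : exists w : nat -> vertex 'I_d1 'I_d2 'I_d3,
    forall i : 'I_5, H i = hyp_of_vertex (w i).
  have [v Hv] : exists v, forall i : 'I_5, H i = hyp_of_vertex (v i).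
    apply: (@fin_all_exists _ _ (fun i v => H i = hyp_of_vertex v)) => i.
    have := pentagram i (ordS (ordS i)).
    by case: i => [[|[|[|[|[|//]]]]] ?] /(_ isT isT isT) /line_of_hyp_of_vertex.
  by exists (v \o inord) => i; rewrite /= inord_val.
have adjE i j : line_of X (H i) (H j) <-> adj ab ac bc (w i) (w j).
  by rewrite !Hw; apply: rwP; apply: line_of_vertexP.
have pent (i : 'I_5) : adj ab ac bc (w i) (w (ordS (ordS i))).
  by apply/adjE; apply: pentagram; case: i => [[|[|[|[|[|//]]]]] ?].
suff /existsP[u] : [exists u : 'I_5, adj ab ac bc (w u) (w (ordS u))].
  by exists u; apply/adjE.
apply: contraNT (nopent (w 0) (w 2) (w 4) (w 1) (w 3)) => /existsPn noedge.
rewrite /induced_pentagon /= !andbT; apply/andP; split; apply/and5P; split.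
- exact: (pent (o5 0)).
- exact: (pent (o5 2)).
- exact: (pent (o5 4)).
- exact: (pent (o5 1)).
- exact: (pent (o5 3)).
- by rewrite adj_sym; apply: (noedge (o5 4)).
- by rewrite adj_sym; apply: (noedge (o5 3)).
- by rewrite adj_sym; apply: (noedge (o5 2)).
- by rewrite adj_sym; apply: (noedge (o5 1)).
- by rewrite adj_sym; apply: (noedge (o5 0)).
Qed.

Lemma muE a b c : mu X a b c = ((a, b) \in U3 X) + ((a, c) \in U2 X) + ((b, c) \in U1 X).
Proof. by rewrite /mu !card_inj_pair_fiber. Qed.

Lemma mu_patternC_pentagon a1 a2 b1 b2 c :
  ((mu X a1 b1 c, mu X a1 b2 c, mu X a2 b1 c, mu X a2 b2 c) == (2, 1, 2, 2)) &&
  ((muAB X a1 b1, muAB X a1 b2, muAB X a2 b1, muAB X a2 b2) == (1, 1, 0, 1)) =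
  induced_pentagon ab ac bc (VC c) (VB b1) (VA a1) (VB b2) (VA a2).
Proof. by rewrite !muE /muAB /induced_pentagon /=; do ![case: (_ \in _)]. Qed.

Lemma mu_patternB_pentagon a1 a2 b c1 c2 :
  ((mu X a1 b c1, mu X a1 b c2, mu X a2 b c1, mu X a2 b c2) == (2, 1, 2, 2)) &&
  ((muAC X a1 c1, muAC X a1 c2, muAC X a2 c1, muAC X a2 c2) == (1, 1, 0, 1)) =
  induced_pentagon ab ac bc (VB b) (VC c1) (VA a1) (VC c2) (VA a2).
Proof. by rewrite !muE /muAC /induced_pentagon /=; do ![case: (_ \in _)]. Qed.

Lemma mu_patternA_pentagon a b1 b2 c1 c2 :
  ((mu X a b1 c1, mu X a b1 c2, mu X a b2 c1, mu X a b2 c2) == (2, 1, 2, 2)) &&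
  ((muBC X b1 c1, muBC X b1 c2, muBC X b2 c1, muBC X b2 c2) == (1, 1, 0, 1)) =
  induced_pentagon ab ac bc (VA a) (VC c1) (VB b1) (VC c2) (VB b2).
Proof. by rewrite !muE /muBC /induced_pentagon /=; do ![case: (_ \in _)]. Qed.

End LinesOfVariety.

Theorem proposition3p7 (K : closedFieldType) (d1 d2 d3 : nat)
  (X : varLines K d1 d2 d3) :
  [pchar K]%R =i pred0 ->
  wf_varLines X ->
  ferrers_like (U3 X) -> ferrers_like (U2 X) -> ferrers_like (U1 X) ->
  Hyp5_star X <->
  (forall (a1 a2 : 'I_d1) (b1 b2 : 'I_d2) (c1 c2 : 'I_d3),
     [/\ (mu X a1 b1 c1, mu X a1 b2 c1, mu X a2 b1 c1, mu X a2 b2 c1) <> (2, 1, 2, 2)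
         \/ (muAB X a1 b1, muAB X a1 b2, muAB X a2 b1, muAB X a2 b2) <> (1, 1, 0, 1),
         (mu X a1 b1 c1, mu X a1 b1 c2, mu X a2 b1 c1, mu X a2 b1 c2) <> (2, 1, 2, 2)
         \/ (muAC X a1 c1, muAC X a1 c2, muAC X a2 c1, muAC X a2 c2) <> (1, 1, 0, 1)
       & (mu X a1 b1 c1, mu X a1 b1 c2, mu X a1 b2 c1, mu X a1 b2 c2) <> (2, 1, 2, 2)
         \/ (muBC X b1 c1, muBC X b1 c2, muBC X b2 c1, muBC X b2 c2) <> (1, 1, 0, 1)]%N).
Proof.
move=> _ [injA [injB [injC _]]] _ _ _.
have muC := mu_patternC_pentagon injA injB injC.
have muB := mu_patternB_pentagon injA injB injC.
have muA := mu_patternA_pentagon injA injB injC.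
split=> [hyp5 a1 a2 b1 b2 c1 c2 | conds].
  have nopent := Hyp5_star_no_induced_pentagon injA injB injC _ _ _ _ _ hyp5.
  by split; apply/neq_or_neqP; rewrite ?muC ?muB ?muA.
apply: (no_induced_pentagon_Hyp5_star injA injB injC) => v0 v1 v2 v3 v4.
apply/negP => /induced_pentagon_shapes[[a1 [a2 [b1 [b2 [c]]]]]|[a1 [a2 [b [c1 [c2]]]]]|
  [a [b1 [b2 [c1 [c2]]]]]]; apply/negP.
- by rewrite -muC; apply/neq_or_neqP; case: (conds a1 a2 b1 b2 c c).
- by rewrite -muB; apply/neq_or_neqP; case: (conds a1 a2 b b c1 c2).
- by rewrite -muA; apply/neq_or_neqP; case: (conds a a b1 b2 c1 c2).
Qed.
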